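(* Let $(M,g)$ be an oriented Riemannian $8$-manifold with Hodge star $*$ and let $v,w$ be vector fields. The linear operator $B$ on $4$-forms given by $B\alpha = w\lrcorner *(v\lrcorner\alpha) - v\lrcorner *(w\lrcorner\alpha)$ is skew-symmetric with respect to the inner product induced by $g$, and its eigenvalues are $0$ and $\pm i|v\wedge w|$.
   Context: In the paper $g$ is the metric of a $\mathrm{Spin}(7)$-structure. $|v\wedge w|$ denotes the norm of the bivector $v\wedge w$, i.e. $|v\wedge w|^2 = |v|^2|w|^2 - g(v,w)^2$. *)

(* Pointwise linear algebra on an oriented 8-dim Euclidean
   space, realised as R^8 with the standard (oriented, orthonormal) basis. *)
From HB Require Import structures.
From mathcomp Require Import all_boot all_order all_algebra.
From mathcomp Require Import complex.
Set Implicit Arguments. Unset Strict Implicit. Unset Printing Implicit Defensive.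
Import Order.TTheory GRing.Theory Num.Theory.
Local Open Scope ring_scope.

Section Forms.
Variable R : rcfType.

Definition vec8 := 'I_8 -> R.

(* differential forms at a point: an element of the exterior algebra
   Lambda(R^8), given by its coefficients on the orthonormal basis
   e_I = e_{i_1} /\ ... /\ e_{i_k}, I = {i_1 < ... < i_k}. *)
Definition extform := {set 'I_8} -> R.

Definition is_kform (k : nat) (a : extform) : Prop :=
  forall I : {set 'I_8}, #|I| != k -> a I = 0.

Definition pos (i : 'I_8) (I : {set 'I_8}) : nat := #|[set j in I | (j < i)%N]|.

(* interior product v _| a (vectors identified with 1-forms via g):
   v _| e_I = sum_{i in I} (-1)^(pos i I) v_i e_{I \ i} *)
Definition interior (v : vec8) (a : extform) : extform :=
  fun J => \sum_(i : 'I_8 | i \notin J) (-1) ^+ pos i (i |: J) * v i * a (i |: J).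

(* sign of the permutation (I sorted, complement of I sorted) *)
Definition hsign (I : {set 'I_8}) : R :=
  (-1) ^+ #|[set p : 'I_8 * 'I_8 | (p.1 \in I) && (p.2 \notin I) && (p.2 < p.1)%N]|.

(* Hodge star for the standard metric and orientation e_0 /\ ... /\ e_7:
   * e_I = hsign I e_{I^c}, so that e_I /\ * e_I = vol. *)
Definition hodge (a : extform) : extform := fun J => hsign (~: J) * a (~: J).

(* inner product induced by g on forms (e_I orthonormal) *)
Definition form_dot (a b : extform) : R := \sum_(I : {set 'I_8}) a I * b I.

Definition Bop (v w : vec8) (a : extform) : extform :=
  fun J => interior w (hodge (interior v a)) J - interior v (hodge (interior w a)) J.

Definition vdot (v w : vec8) : R := \sum_i v i * w i.

Definition wedge_norm (v w : vec8) : R :=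
  Num.sqrt (vdot v v * vdot w w - vdot v w ^+ 2).

Definition quad : {set {set 'I_8}} := [set I : {set 'I_8} | #|I| == 4%N].

Definition basis4 (I : {set 'I_8}) : extform := fun J => (J == I)%:R.

Definition Bmatrix (v w : vec8) : 'M[complex R]_#|quad| :=
  \matrix_(i, j) Complex (Bop v w (basis4 (enum_val j)) (enum_val i)) 0.

End Forms.

From HB Require Import structures.
From mathcomp Require Import all_boot all_order all_algebra.
From mathcomp Require Import complex ring lra zify.
From mathcomp Require Import boolp functions.
Set Implicit Arguments. Unset Strict Implicit. Unset Printing Implicit Defensive.
Import Order.TTheory GRing.Theory Num.Theory.
Local Open Scope ring_scope.

(* Let D := w /\ i_v - v /\ i_w, the action on forms of the infinitesimal
   rotation of the (v, w)-plane, and let alpha be the grade involution.  The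
   relations i_u * = - alpha * (u /\ .) and u /\ * = alpha * i_u give
   B = - alpha * D, hence B = - * D on 4-forms.  D is skew-adjoint and commutes
   with *, and * is self-adjoint and involutive on 4-forms, so B is
   skew-adjoint.  The anticommutation relations of wedge and interior products
   give D^3 = - |v /\ w|^2 D, so B^3 = - |v /\ w|^2 B and every eigenvalue z
   satisfies z (z^2 + |v /\ w|^2) = 0.  Conversely, when v /\ w <> 0 the form
   v /\ w /\ e_T lies in the kernel, and B <> 0, so that for a real row vector
   x with x B <> 0, x B^2 + i c x B is an eigenvector for i c, c = +-|v /\ w|;
   when v /\ w = 0, B^3 = 0 and 0 is still an eigenvalue. *)

Lemma sign_odd_eq (R : pzRingType) (m n : nat) :
  odd m = odd n -> (-1) ^+ m = (-1) ^+ n :> R.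
Proof. by move=> e; rewrite -signr_odd e signr_odd. Qed.

Lemma sign_ltn_swap (R : pzRingType) (i k : 'I_8) :
  i != k -> (-1) ^+ (k < i) = - (-1) ^+ (i < k) :> R.
Proof.
by move=> ik; case: (ltngtP i k) ik => [_ _|_ _|/val_inj ->]; rewrite ?eqxx //= expr1 opprK.
Qed.

Lemma card_ord_lt n (i : 'I_n) : #|[set j : 'I_n | (j < i)%N]| = i.
Proof.
rewrite -sum1dep_card (big_ord_narrow (F := fun _ => 1%N) (ltnW (ltn_ord i))).
by rewrite sum1_card card_ord.
Qed.

Lemma setU1D1 (T : finType) (i k : T) (J : {set T}) :
  i != k -> (i |: J) :\ k = i |: (J :\ k).
Proof. by move=> ik; apply/setP => x; rewrite !inE; case: (eqVneq x i) => // ->; rewrite ik. Qed.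

Lemma exists_set_avoid (T : finType) (r s : T) k : (k + 2 <= #|T|)%N ->
  exists S : {set T}, [/\ r \notin S, s \notin S & #|S| = k].
Proof.
move=> kT; have : (k <= #|~: [set r; s]|)%N.
  rewrite -(leq_add2r 2) (leq_trans kT) // -(cardsC [set r; s]) addnC leq_add2l.
  by rewrite cards2; case: (r == s).
case/card_geqP => l [ul sl lrs]; exists [set x in l]; split.
- by apply/negP; rewrite inE => /lrs; rewrite !inE eqxx.
- by apply/negP; rewrite inE => /lrs; rewrite !inE eqxx orbT.
- by rewrite cardsE (card_uniqP ul).
Qed.

Lemma pos_setU1 (i k : 'I_8) (J : {set 'I_8}) :
  i \notin J -> pos k (i |: J) = (pos k J + (i < k))%N.
Proof.
move=> iJ; rewrite /pos; case: ltnP => ik.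
  have -> : [set j in i |: J | (j < k)%N] = i |: [set j in J | (j < k)%N].
    by apply/setP => j; rewrite !inE; case: eqP => [->|]; rewrite ?ik.
  by rewrite cardsU1 inE (negPf iJ) addnC.
rewrite addn0; apply: eq_card => j; rewrite !inE; case: eqP => [->|] //=.
by rewrite ltnNge ik andbF.
Qed.

Lemma pos_setD1 (i k : 'I_8) (J : {set 'I_8}) :
  i \in J -> pos k J = (pos k (J :\ i) + (i < k))%N.
Proof. by move=> iJ; rewrite -pos_setU1 ?setD11 // setD1K. Qed.

Lemma pos_setU1_id (i : 'I_8) (J : {set 'I_8}) : i \notin J -> pos i (i |: J) = pos i J.
Proof. by move=> iJ; rewrite pos_setU1 // ltnn addn0. Qed.

Lemma pos_setC (i : 'I_8) (J : {set 'I_8}) : (pos i J + pos i (~: J))%N = i.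
Proof.
rewrite -[RHS]card_ord_lt -(cardsID J [set j : 'I_8 | (j < i)%N]) /pos.
by congr (_ + _)%N; apply: eq_card => j; rewrite !inE andbC.
Qed.

Definition lt_pairs (K : {set 'I_8}) : {set 'I_8 * 'I_8} :=
  [set p | (p.1 \in K) && (p.2 \notin K) && (p.2 < p.1)%N].

Definition nbelow (K : {set 'I_8}) (p : 'I_8) : nat :=
  #|[set q | (q \notin K) && (q < p)%N]|.

Lemma card_lt_pairs (K : {set 'I_8}) : #|lt_pairs K| = (\sum_(p in K) nbelow K p)%N.
Proof.
rewrite -sum1dep_card (eq_bigl (fun x => (x.1 \in K) && ((x.2 \notin K) && (x.2 < x.1)%N))).
  rewrite -(pair_big_dep (mem K) (fun p q => (q \notin K) && (q < p)%N) (fun _ _ => 1%N)).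
  by apply: eq_bigr => p _; rewrite sum1dep_card.
by move=> x; rewrite andbA.
Qed.

Lemma card_lt_pairsU1 (i : 'I_8) (K : {set 'I_8}) :
  i \notin K -> (#|lt_pairs (i |: K)| + #|K| = #|lt_pairs K| + i)%N.
Proof.
move=> iK; have nbelowU1 p : nbelow K p = (nbelow (i |: K) p + (i < p))%N.
  rewrite /nbelow; case: ltnP => ip.
    have -> : [set q | (q \notin K) && (q < p)%N] =
        i |: [set q | (q \notin i |: K) && (q < p)%N].
      by apply/setP => q; rewrite !inE; case: eqP => [->|] //=; rewrite iK ip.
    by rewrite cardsU1 !inE eqxx /= addnC.
  rewrite addn0; apply: eq_card => q; rewrite !inE; case: eqP => [->|] //=.
  by rewrite ltnNge ip andbF.
have nbelow_i : (nbelow (i |: K) i + pos i K)%N = i.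
  rewrite -[RHS]card_ord_lt -(cardsID K) addnC /nbelow /pos.
  congr (_ + _)%N; apply: eq_card => q; rewrite !inE; first by rewrite andbC.
  by case: (eqVneq q i) => [->|]; rewrite ?ltnn ?andbF.
have above_i : (#|[set p in K | (i < p)%N]| + pos i K)%N = #|K|.
  rewrite -(cardsID [set p : 'I_8 | (i < p)%N] K) /pos; congr (_ + _)%N.
    by apply: eq_card => q; rewrite !inE andbC.
  apply: eq_card => q; rewrite !inE.
  by case: (ltngtP q i) => [|_|/val_inj ->]; rewrite ?andbT ?andbF ?(negPf iK).
have sum_nbelow : (\sum_(p in K) nbelow K p =
    \sum_(p in K) nbelow (i |: K) p + #|[set p in K | (i < p)%N]|)%N.
  rewrite -sum1dep_card big_mkcondr -big_split /=.
  by apply: eq_bigr => p _; rewrite nbelowU1; case: (i < p)%N.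
rewrite !card_lt_pairs big_setU1 //= sum_nbelow; move: nbelow_i above_i.
by move: (i : nat) #|K| (pos i K) (nbelow _ i) #|[set p in K | _]| (\sum_(p in K) _)%N; lia.
Qed.

Lemma hsign_setU1 (R : rcfType) (i : 'I_8) (K : {set 'I_8}) :
  i \notin K -> hsign R (i |: K) = (-1) ^+ (i + #|K|) * hsign R K.
Proof.
move=> iK; rewrite /hsign -/(lt_pairs _) -/(lt_pairs _) -exprD; apply: sign_odd_eq.
by move: (card_lt_pairsU1 iK); move: #|lt_pairs _| #|lt_pairs _| #|K|; lia.
Qed.

Lemma hsign_setD1 (R : rcfType) (i : 'I_8) (K : {set 'I_8}) :
  i \in K -> hsign R K = (-1) ^+ (i + #|K :\ i|) * hsign R (K :\ i).
Proof. by move=> iK; rewrite -{1}(setD1K iK) hsign_setU1 ?setD11. Qed.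

Lemma hsign_sqr (R : rcfType) (K : {set 'I_8}) : hsign R K * hsign R K = 1.
Proof. by rewrite -expr2 sqrr_sign. Qed.

Lemma card_lt_pairsC (K : {set 'I_8}) :
  (#|lt_pairs K| + #|lt_pairs (~: K)|)%N = (#|K| * #|~: K|)%N.
Proof.
have -> : #|lt_pairs (~: K)| = #|[set p | (p.1 \in K) && (p.2 \notin K) && (p.1 < p.2)%N]|.
  rewrite -(card_imset _ (can_inj swap_pairK)) (can_imset_pre _ swap_pairK).
  by apply: eq_card => -[p q]; rewrite !inE /= negbK (andbC (p \notin K)).
rewrite -cardsX -(cardsID [set p : 'I_8 * 'I_8 | (p.2 < p.1)%N] (setX K (~: K))).
congr (_ + _)%N; apply: eq_card => -[p q]; rewrite !inE /= ?andbA //.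
by case: (ltngtP p q) => [_|_|/val_inj ->] /=; rewrite ?andbT ?andbF ?andbN.
Qed.

Lemma hsign_setC (R : rcfType) (K : {set 'I_8}) :
  hsign R (~: K) = (-1) ^+ #|K| * hsign R K.
Proof.
rewrite /hsign -/(lt_pairs _) -/(lt_pairs _) -exprD; apply: sign_odd_eq.
have := card_lt_pairsC K; have := cardsC K; rewrite card_ord.
move: #|K| #|~: K| #|lt_pairs K| #|lt_pairs (~: K)| => m n x y mn xy.
have odd_mn : odd (m * n) = odd m by rewrite oddM (_ : odd n = odd m) ?andbb //; lia.
by move: xy odd_mn; move: (m * n)%N; lia.
Qed.

HB.instance Definition _ (R : rcfType) :=
  GRing.Lmodule.copy (extform R) ({set 'I_8} -> R^o).

Section ExteriorAlgebra.
Variable R : rcfType.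
Implicit Types (u v w : vec8 R) (a b c : extform R) (i r s x : 'I_8).
Implicit Types (I J K M S T : {set 'I_8}).

Lemma form_addE a b J : (a + b) J = a J + b J. Proof. by []. Qed.
Lemma form_oppE a J : (- a) J = - a J. Proof. by []. Qed.
Lemma form_scaleE (k : R) a J : (k *: a) J = k * a J. Proof. by []. Qed.
Lemma form0E J : (0 : extform R) J = 0. Proof. by []. Qed.
Definition formE := (form_addE, form_oppE, form_scaleE, form0E).

Lemma vdotC u v : vdot u v = vdot v u.
Proof. by apply: eq_bigr => i _; rewrite mulrC. Qed.

Lemma sign_cancel n (x y z : R) : (-1) ^+ n * x * ((-1) ^+ n * y * z) = x * y * z.
Proof.
have : (-1) ^+ n * (-1) ^+ n = 1 :> R by rewrite -expr2 sqrr_sign.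
by set s := (-1) ^+ n => ss; rewrite -[RHS]mul1r -ss; ring.
Qed.

Definition wedge u a : extform R :=
  fun J => \sum_(i in J) (-1) ^+ pos i J * u i * a (J :\ i).

Lemma wedge_is_linear u : linear (wedge u).
Proof.
move=> k a b; apply/funext => J; rewrite !formE /wedge mulr_sumr -big_split /=.
by apply: eq_bigr => i _; rewrite !formE; ring.
Qed.
HB.instance Definition _ u :=
  GRing.isLinear.Build R (extform R) (extform R) _ (wedge u) (wedge_is_linear u).

Lemma interior_is_linear u : linear (interior u).
Proof.
move=> k a b; apply/funext => J; rewrite !formE /interior mulr_sumr -big_split /=.
by apply: eq_bigr => i _; rewrite !formE; ring.
Qed.
HB.instance Definition _ u :=
  GRing.isLinear.Build R (extform R) (extform R) _ (interior u) (interior_is_linear u).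

Lemma hodge_is_linear : linear (@hodge R).
Proof. by move=> k a b; apply/funext => J; rewrite /hodge !formE; ring. Qed.
HB.instance Definition _ :=
  GRing.isLinear.Build R (extform R) (extform R) _ (@hodge R) hodge_is_linear.

(* Specialisations of [linearB] etc., much faster to rewrite with. *)
Lemma wedge0 u : wedge u 0 = 0. Proof. exact: linear0. Qed.
Lemma wedgeN u a : wedge u (- a) = - wedge u a. Proof. exact: linearN. Qed.
Lemma wedgeB u a b : wedge u (a - b) = wedge u a - wedge u b. Proof. exact: linearB. Qed.
Lemma wedgeZ u k a : wedge u (k *: a) = k *: wedge u a. Proof. exact: linearZ. Qed.
Lemma interior0 u : interior u 0 = 0. Proof. exact: linear0. Qed.
Lemma interiorN u a : interior u (- a) = - interior u a. Proof. exact: linearN. Qed.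
Lemma interiorB u a b : interior u (a - b) = interior u a - interior u b.
Proof. exact: linearB. Qed.
Lemma interiorZ u k a : interior u (k *: a) = k *: interior u a. Proof. exact: linearZ. Qed.

Lemma interior_wedgeE u u' a J :
  interior u (wedge u' a) J + wedge u' (interior u a) J = vdot u u' * a J.
Proof.
pose X i k := u i * u' k * a (i |: (J :\ k)).
have lhs : interior u (wedge u' a) J = \sum_(i | i \notin J)
    (u i * u' i * a J + \sum_(k in J) (-1) ^+ (pos i J + pos k J + (i < k)) * X i k).
  apply: eq_bigr => i iJ; rewrite /wedge big_setU1 //= setU1K // mulrDr pos_setU1_id //.
  congr (_ + _); first exact: sign_cancel.
  rewrite mulr_sumr; apply: eq_bigr => k kJ.
  have ik : i != k by apply: contraNneq iJ => ->.
  by rewrite setU1D1 // pos_setU1 // /X !exprD; ring.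
have rhs : wedge u' (interior u a) J = \sum_(k in J)
    (u k * u' k * a J + \sum_(i | i \notin J) (-1) ^+ (pos k J + pos i (J :\ k)) * X i k).
  apply: eq_bigr => k kJ; rewrite /interior.
  rewrite (eq_bigl (mem (k |: ~: J))); last by move=> i; rewrite !inE negb_and negbK orbC.
  rewrite big_setU1 ?inE ?negbK //= setD1K // mulrDr.
  congr (_ + _); first by rewrite sign_cancel (mulrC (u' k)).
  rewrite mulr_sumr; apply: eq_big => [i|i]; rewrite inE // => iJ.
  have iJk : i \notin J :\ k by rewrite inE negb_and iJ orbT.
  by rewrite pos_setU1_id // /X exprD; ring.
rewrite lhs rhs /vdot [in RHS](bigID (mem J)) /= addrC mulrDl !big_distrl /= !big_split /=.
rewrite addrACA [X in _ + X = _](_ : _ = 0) ?addr0 //.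
rewrite exchange_big -big_split big1 //= => k kJ; rewrite -big_split big1 //= => i iJ.
have ik : i != k by apply: contraNneq iJ => ->.
have lt_xor : ((i < k) + (k < i))%N = 1%N.
  by case: (ltngtP i k) ik => // /val_inj ->; rewrite eqxx.
rewrite (@sign_odd_eq _ _ (pos k J + pos i (J :\ k)).+1).
  by rewrite exprS mulN1r mulNr addNr.
by rewrite (pos_setD1 i kJ); move: lt_xor; move: (i < k)%N (k < i)%N (pos i _) (pos k J); lia.
Qed.

Lemma interior_wedge u u' a :
  interior u (wedge u' a) = vdot u u' *: a - wedge u' (interior u a).
Proof. by apply/funext => J; rewrite !formE -interior_wedgeE addrK. Qed.

Lemma wedgeC u u' a : wedge u (wedge u' a) = - wedge u' (wedge u a).
Proof.
apply/funext => J; rewrite formE /wedge.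
under eq_bigr do rewrite mulr_sumr.
rewrite (exchange_big_dep (mem J)) /=; last by move=> i k _; rewrite inE => /andP[].
rewrite -sumrN; apply: eq_bigr => k kJ.
rewrite mulr_sumr -sumrN; apply: eq_big => i.
  by rewrite !inE; case: (eqVneq i k) => [->|]; rewrite ?andbF ?kJ ?andbT.
rewrite inE => /andP[iJ]; rewrite inE => /andP[ki _].
have -> : J :\ i :\ k = J :\ k :\ i by rewrite !setDDl setUC.
by rewrite (pos_setD1 i kJ) (pos_setD1 k iJ) !exprD (sign_ltn_swap _ ki); ring.
Qed.

Lemma interiorC u u' a : interior u (interior u' a) = - interior u' (interior u a).
Proof.
apply/funext => J; rewrite formE /interior.
under eq_bigr do rewrite mulr_sumr.
rewrite (exchange_big_dep (fun k => k \notin J)) /=; last first.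
  by move=> i k _; rewrite inE negb_or => /andP[].
rewrite -sumrN; apply: eq_bigr => k kJ.
rewrite mulr_sumr -sumrN; apply: eq_big => i.
  by rewrite !inE !negb_or; case: (eqVneq i k) => [->|]; rewrite ?andbF ?kJ ?andbT.
move=> /andP[iJ]; rewrite !inE negb_or => /andP[ki _].
have ikJ : i \notin k |: J by rewrite !inE negb_or eq_sym ki.
have kiJ : k \notin i |: J by rewrite !inE negb_or ki.
rewrite !pos_setU1_id // (pos_setU1 _ iJ) (pos_setU1 _ kJ) setUCA.
by rewrite !exprD (sign_ltn_swap _ ki); ring.
Qed.

Lemma wedge_wedge u a : wedge u (wedge u a) = 0.
Proof.
apply/funext => J; have := congr1 (fun f : extform R => f J) (wedgeC u u a).
by rewrite /= !formE; lra.
Qed.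

Lemma interior_interior u a : interior u (interior u a) = 0.
Proof.
apply/funext => J; have := congr1 (fun f : extform R => f J) (interiorC u u a).
by rewrite /= !formE; lra.
Qed.

Definition gradeinv a : extform R := fun J => (-1) ^+ #|J| * a J.

Lemma gradeinv_is_linear : linear gradeinv.
Proof. by move=> k a b; apply/funext => J; rewrite /gradeinv !formE; ring. Qed.
HB.instance Definition _ :=
  GRing.isLinear.Build R (extform R) (extform R) _ gradeinv gradeinv_is_linear.

Lemma gradeinvK : involutive gradeinv.
Proof. by move=> a; apply/funext => J; rewrite /gradeinv signrMK. Qed.

Lemma gradeinv_kform k a : is_kform k a -> gradeinv a = (-1) ^+ k *: a.
Proof.
move=> ka; apply/funext => J; rewrite /gradeinv formE.
by case: (eqVneq #|J| k) => [->|Jk] //; rewrite ka // !mulr0.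
Qed.

Lemma gradeinv4 a : is_kform 4 a -> gradeinv a = a.
Proof. by move/gradeinv_kform ->; rewrite -signr_odd expr0 scale1r. Qed.

Lemma wedge_gradeinv u a : wedge u (gradeinv a) = - gradeinv (wedge u a).
Proof.
apply/funext => J; rewrite /wedge /gradeinv formE mulr_sumr -sumrN.
by apply: eq_bigr => i iJ; rewrite [in RHS](cardsD1 i J) iJ exprS; ring.
Qed.

Lemma interior_hodge u a : interior u (hodge a) = - gradeinv (hodge (wedge u a)).
Proof.
apply/funext => J; rewrite /interior /gradeinv /hodge /wedge formE !mulr_sumr -sumrN.
apply: eq_big => [i|i iJ]; first by rewrite inE.
have iJC : i \in ~: J by rewrite inE.
have -> : ~: (i |: J) = ~: J :\ i by rewrite setCU setIC -setDE.
rewrite pos_setU1_id // (hsign_setD1 _ iJC).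
have -> : (-1) ^+ pos i J = (-1) ^+ (#|J| + (i + #|~: J :\ i|) + pos i (~: J)).+1 :> R.
  apply: sign_odd_eq; move: (pos_setC i J) (cardsC J); rewrite card_ord (cardsD1 i (~: J)) iJC.
  by move: #|J| #|~: J :\ i| (pos i J) (pos i (~: J)) (i : nat); lia.
by rewrite exprS !exprD; ring.
Qed.

Lemma wedge_hodge u a : wedge u (hodge a) = gradeinv (hodge (interior u a)).
Proof.
apply/funext => J; rewrite /interior /gradeinv /hodge /wedge !mulr_sumr.
apply: eq_big => [i|i iJ]; first by rewrite inE negbK.
have iJC : i \notin ~: J by rewrite inE negbK.
have -> : ~: (J :\ i) = i |: ~: J by rewrite setCD setUC.
rewrite pos_setU1_id // hsign_setU1 //.
have e : (-1) ^+ pos i J * (-1) ^+ (i + #|~: J|) = (-1) ^+ #|J| * (-1) ^+ pos i (~: J) :> R.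
  rewrite -!exprD; apply: sign_odd_eq; move: (pos_setC i J) (cardsC J); rewrite card_ord.
  by move: #|J| #|~: J| (pos i J) (pos i (~: J)) (i : nat); lia.
transitivity ((-1) ^+ pos i J * (-1) ^+ (i + #|~: J|) * (u i * hsign R (~: J) * a (i |: ~: J))).
  by ring.
by rewrite e; ring.
Qed.

Lemma hodgeK a : hodge (hodge a) = gradeinv a.
Proof.
apply/funext => J; rewrite /hodge /gradeinv setCK hsign_setC.
transitivity ((-1) ^+ #|J| * (hsign R J * hsign R J) * a J); first ring.
by rewrite hsign_sqr mulr1.
Qed.

Lemma form_dotC a b : form_dot a b = form_dot b a.
Proof. by apply: eq_bigr => I _; rewrite mulrC. Qed.

Lemma form_dotBl a b c : form_dot (a - b) c = form_dot a c - form_dot b c.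
Proof. by rewrite /form_dot -sumrB; apply: eq_bigr => I _; rewrite !formE mulrBl. Qed.

Lemma form_dotNl a b : form_dot (- a) b = - form_dot a b.
Proof. by rewrite -sub0r form_dotBl /form_dot big1 ?sub0r // => I _; rewrite formE mul0r. Qed.

Lemma form_dotNr a b : form_dot a (- b) = - form_dot a b.
Proof. by rewrite form_dotC form_dotNl form_dotC. Qed.

Lemma form_dot_hodge a b : form_dot (hodge a) b = form_dot (gradeinv a) (hodge b).
Proof.
rewrite /form_dot (reindex_inj (@setC_inj _)) /=; apply: eq_bigr => J _.
by rewrite /hodge /gradeinv setCK hsign_setC sign_cancel; ring.
Qed.

Lemma form_dot_interior u a b : form_dot (interior u a) b = form_dot a (wedge u b).
Proof.
rewrite /form_dot /interior /wedge.
under eq_bigr do rewrite mulr_suml.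
rewrite (exchange_big_dep predT) //=.
under [RHS]eq_bigr do rewrite mulr_sumr.
rewrite [RHS](exchange_big_dep predT) //=; apply: eq_bigr => i _.
rewrite [RHS](reindex_onto (fun J => i |: J) (fun I => I :\ i)) /=; last first.
  by move=> I iI; rewrite setD1K.
apply: eq_big => J; last by move=> iJ; rewrite setU1K //; ring.
rewrite setU11 /=; case: (boolP (i \in J)) => iJ /=; last by rewrite setU1K // eqxx.
by apply/esym/negbTE; apply: contraL iJ => /eqP <-; rewrite setD11.
Qed.

Lemma form_dot_wedge u a b : form_dot (wedge u a) b = form_dot a (interior u b).
Proof. by rewrite form_dotC -form_dot_interior form_dotC. Qed.

Lemma is_kformB k a b : is_kform k a -> is_kform k b -> is_kform k (a - b).
Proof. by move=> ka kb J kJ; rewrite !formE ka ?kb ?subr0. Qed.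

Lemma is_kformN k a : is_kform k a -> is_kform k (- a).
Proof. by move=> ka J kJ; rewrite formE ka ?oppr0. Qed.

Lemma is_kform_interior k u a : is_kform k.+1 a -> is_kform k (interior u a).
Proof.
move=> ka J kJ; rewrite /interior big1 // => i iJ; rewrite ka ?mulr0 //.
by rewrite cardsU1 iJ add1n eqSS.
Qed.

Lemma is_kform_wedge k u a : is_kform k a -> is_kform k.+1 (wedge u a).
Proof.
move=> ka J kJ; rewrite /wedge big1 // => i iJ; rewrite ka ?mulr0 //.
by apply: contra kJ => /eqP <-; rewrite (cardsD1 i J) iJ.
Qed.

Lemma is_kform_hodge k a : is_kform k a -> is_kform (8 - k) (hodge a).
Proof.
move=> ka J kJ; rewrite /hodge ka ?mulr0 //; apply: contra kJ => /eqP <-.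
by rewrite [#|J|]cardsCs card_ord.
Qed.

Lemma is_kform_basis4 k I : #|I| = k -> is_kform k (basis4 R I).
Proof.
move=> cI J JI; rewrite /basis4; case: eqP => // eJ.
by move: JI; rewrite eJ cI eqxx.
Qed.

Lemma interior_basis4 u i J :
  i \notin J -> interior u (basis4 R (i |: J)) J = (-1) ^+ pos i J * u i.
Proof.
move=> iJ; rewrite /interior (bigD1 i) //= pos_setU1_id // /basis4 eqxx mulr1.
rewrite big1 ?addr0 // => k /andP[kJ ki]; case: eqP => [e|]; last by rewrite mulr0.
by have := setU11 k J; rewrite e !inE (negPf ki) (negPf kJ).
Qed.

Lemma interior_basis4_eq0 u K M x :
  x \in M -> x \notin K -> interior u (basis4 R K) M = 0.
Proof.
move=> xM xK; rewrite /interior big1 // => i _; rewrite /basis4.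
by case: eqP => [e|]; [move: xK; rewrite -e !inE xM orbT | rewrite mulr0].
Qed.

Lemma wedge_basis4 u i S :
  i \notin S -> wedge u (basis4 R S) (i |: S) = (-1) ^+ pos i S * u i.
Proof.
move=> iS; rewrite /wedge (bigD1 i) ?setU11 //= setU1K // pos_setU1_id // /basis4 eqxx mulr1.
rewrite big1 ?addr0 // => k /andP[kS ki]; case: eqP => [e|]; last by rewrite mulr0.
have : i \in (i |: S) :\ k by rewrite !inE eq_sym ki eqxx.
by rewrite e (negPf iS).
Qed.

Lemma wedge_basis4_eq0 u S M x :
  x \in S -> x \notin M -> wedge u (basis4 R S) M = 0.
Proof.
move=> xS xM; rewrite /wedge big1 // => i _; rewrite /basis4.
by case: eqP => [e|]; [move: xS; rewrite -e !inE (negPf xM) andbF | rewrite mulr0].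
Qed.

Lemma wedge_interior_basis4 u u' r s T : r != s -> r \notin T -> s \notin T ->
  wedge u (interior u' (basis4 R (r |: T))) (s |: T) =
  (-1) ^+ (pos s T + pos r T) * (u s * u' r).
Proof.
move=> rs rT sT; rewrite {1}/wedge (bigD1 s) ?setU11 //= setU1K // interior_basis4 //.
rewrite pos_setU1_id // big1 ?addr0; first by rewrite exprD; ring.
move=> i /andP[iT si]; rewrite (@interior_basis4_eq0 _ _ _ s) ?mulr0 //.
  by rewrite !inE eq_sym si eqxx.
by rewrite !inE negb_or eq_sym rs.
Qed.

Lemma wedge_wedge_basis4 u u' r s T : r != s -> r \notin T -> s \notin T ->
  wedge u (wedge u' (basis4 R T)) (r |: (s |: T)) =
  (-1) ^+ (pos r T + pos s T + (r < s)) * (u s * u' r - u r * u' s).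
Proof.
move=> rs rT sT; have rsT : r \notin s |: T by rewrite !inE negb_or rs.
rewrite {1}/wedge (bigD1 r) ?setU11 //= setU1K // wedge_basis4 //.
rewrite (bigD1 s) /=; last by rewrite !inE eqxx orbT eq_sym.
rewrite (setU1D1 _ rs) setU1K // wedge_basis4 // big1 ?addr0; last first.
  move=> i /andP[/andP[iK ir] i_s]; rewrite (@wedge_basis4_eq0 _ _ _ i) ?mulr0 ?setD11 //.
  by move: iK; rewrite !inE (negPf ir) (negPf i_s).
rewrite pos_setU1_id // pos_setU1 // pos_setU1 // pos_setU1_id //.
by rewrite !exprD (sign_ltn_swap _ rs); ring.
Qed.

End ExteriorAlgebra.

Section Rotation.
Variables (R : rcfType) (v w : vec8 R).
Implicit Types (a b c : extform R) (r s : 'I_8) (T : {set 'I_8}).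

(* The derivation of the exterior algebra induced by the infinitesimal rotation
   x |-> <v, x> w - <w, x> v of the (v, w)-plane. *)
Definition rot a : extform R := wedge w (interior v a) - wedge v (interior w a).

Lemma rot_is_linear : linear rot.
Proof.
by move=> k a b; rewrite /rot !linearP; apply/funext => J /=; rewrite !formE; ring.
Qed.
HB.instance Definition _ := GRing.isLinear.Build R (extform R) (extform R) _ rot rot_is_linear.

Definition wedge_sqnorm : R := vdot v v * vdot w w - vdot v w ^+ 2.

Lemma sum_minor_sqr :
  \sum_(r < 8) \sum_(s < 8) (v r * w s - v s * w r) ^+ 2 = 2 * wedge_sqnorm.
Proof.
have e r s : (v r * w s - v s * w r) ^+ 2 =
    v r * v r * (w s * w s) + v s * v s * (w r * w r) - 2 * (v r * w r * (v s * w s)).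
  by ring.
under eq_bigr do under eq_bigr do rewrite e.
under eq_bigr do rewrite big_split /= big_split /= sumrN.
rewrite big_split /= big_split /= sumrN -!big_distrlr /= exchange_big /= -!big_distrlr /=.
have -> : \sum_(i < 8) \sum_(j < 8) 2 * (v i * w i * (v j * w j)) = 2 * (vdot v w * vdot v w).
  by rewrite big_distrlr mulr_sumr; apply: eq_bigr => i _; rewrite mulr_sumr.
by rewrite /wedge_sqnorm /vdot; ring.
Qed.

Lemma wedge_sqnorm_ge0 : 0 <= wedge_sqnorm.
Proof.
rewrite -(@pmulr_rge0 _ 2) // -sum_minor_sqr.
by apply: sumr_ge0 => r _; apply: sumr_ge0 => s _; apply: sqr_ge0.
Qed.

Lemma exists_minor : wedge_sqnorm != 0 -> exists r s, v r * w s - v s * w r != 0.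
Proof.
move=> N0; have [/existsP[r /existsP[s rs]]|/existsPn minors0] :=
  boolP [exists r, exists s, v r * w s - v s * w r != 0]; first by exists r, s.
have : 2 * wedge_sqnorm == 0.
  rewrite -sum_minor_sqr big1 // => r _; rewrite big1 // => s _.
  by move: (minors0 r) => /existsPn/(_ s); rewrite negbK => /eqP ->; rewrite expr0n.
by rewrite mulf_eq0 pnatr_eq0 (negPf N0).
Qed.

(* Push the interior products to the right with the anticommutation relations;
   the resulting normal forms agree coefficientwise. *)
Lemma rot_cube a : rot (rot (rot a)) = - wedge_sqnorm *: rot a.
Proof.
rewrite /rot; do 6! rewrite ?wedgeB ?wedgeN ?wedgeZ ?interiorB ?interiorN ?interiorZ
  ?interior_wedge ?wedge_wedge ?interior_interior ?(wedgeC v w) ?(interiorC w v)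
  ?wedge0 ?interior0.
by apply/funext => J /=; rewrite !formE /wedge_sqnorm (vdotC w v); ring.
Qed.

Lemma rot_wedge_wedge c : rot (wedge v (wedge w c)) = 0.
Proof.
rewrite /rot; do 3! rewrite ?wedgeB ?wedgeN ?wedgeZ ?interior_wedge ?wedge_wedge
  ?(wedgeC v w) ?wedge0.
by apply/funext => J /=; rewrite !formE (vdotC w v); ring.
Qed.

Lemma rot_hodge a : rot (hodge a) = hodge (rot a).
Proof.
rewrite /rot !interior_hodge !wedgeN !wedge_gradeinv !opprK !wedge_hodge !gradeinvK.
rewrite -linearB !interior_wedge (vdotC w v); congr hodge.
by apply/funext => J /=; rewrite !formE; ring.
Qed.

Lemma form_dot_rot a b : form_dot (rot a) b = - form_dot a (rot b).
Proof.
rewrite /rot form_dotBl !form_dot_wedge [in RHS]form_dotC form_dotBl !form_dot_wedge.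
by rewrite opprB (form_dotC (interior w b)) (form_dotC (interior v b)).
Qed.

Lemma is_kform_rot k a : is_kform k.+1 a -> is_kform k.+1 (rot a).
Proof. by move=> ka; apply: is_kformB; apply/is_kform_wedge/is_kform_interior. Qed.

Lemma rot_basis4 r s T : r != s -> r \notin T -> s \notin T ->
  rot (basis4 R (r |: T)) (s |: T) = (-1) ^+ (pos s T + pos r T) * (v r * w s - v s * w r).
Proof. by move=> rs rT sT; rewrite /rot !formE !wedge_interior_basis4 //; ring. Qed.

Lemma BopE a : Bop v w a = - gradeinv (hodge (rot a)).
Proof.
rewrite /rot !linearB; apply/funext => J /=.
by rewrite /Bop -!formE !interior_hodge !formE; ring.
Qed.

Lemma Bop4E a : is_kform 4 a -> Bop v w a = - hodge (rot a).
Proof.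
by move=> ka; rewrite BopE gradeinv4 //; apply/(is_kform_hodge (k := 4))/is_kform_rot.
Qed.

Lemma is_kform_Bop a : is_kform 4 a -> is_kform 4 (Bop v w a).
Proof.
by move=> ka; rewrite Bop4E //; apply/is_kformN/(is_kform_hodge (k := 4))/is_kform_rot.
Qed.

Lemma form_dot_Bop a b : is_kform 4 a -> is_kform 4 b ->
  form_dot (Bop v w a) b = - form_dot a (Bop v w b).
Proof.
move=> ka kb; rewrite !Bop4E // form_dotNl form_dot_hodge gradeinv4; last exact: is_kform_rot.
by rewrite form_dot_rot rot_hodge form_dotNr.
Qed.

Lemma Bop_cube a : is_kform 4 a ->
  Bop v w (Bop v w (Bop v w a)) = - wedge_sqnorm *: Bop v w a.
Proof.
move=> ka; have -> : Bop v w (Bop v w a) = rot (rot a).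
  rewrite (Bop4E (is_kform_Bop ka)) (Bop4E ka) (linearN rot) (linearN (@hodge R)) opprK /=.
  by rewrite rot_hodge hodgeK gradeinv4 //; apply/is_kform_rot/is_kform_rot.
rewrite Bop4E; last exact/is_kform_rot/is_kform_rot.
by rewrite rot_cube linearZ /= Bop4E // scalerN.
Qed.

Lemma Bop_wedge_wedge c : is_kform 2 c -> Bop v w (wedge v (wedge w c)) = 0.
Proof.
by move=> kc; rewrite Bop4E ?rot_wedge_wedge ?linear0 ?oppr0 //; do 2!apply: is_kform_wedge.
Qed.

End Rotation.

Lemma eigenvalue_cube (F : fieldType) n (M : 'M[F]_n) (c z : F) :
  M *m M *m M = c *: M -> eigenvalue M z -> z ^+ 3 = c * z.
Proof.
move=> M3 /eigenvalueP[u uM u0].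
have uM3 : u *m M *m M *m M = z ^+ 3 *: u.
  by rewrite uM -!scalemxAl uM -scalemxAl uM !scalerA exprS expr2 mulrA.
have := congr1 (mulmx u) M3; rewrite !mulmxA uM3 -scalemxAr uM scalerA => /eqP.
by rewrite -subr_eq0 -scalerBl scaler_eq0 (negPf u0) orbF subr_eq0 => /eqP.
Qed.

Lemma eigenvalue0_cube0 (F : fieldType) n (M : 'M[F]_n) (u : 'rV[F]_n) :
  M *m M *m M = 0 -> u != 0 -> eigenvalue M 0.
Proof.
move=> M3 u0; apply/eigenvalueP.
have [uM|uM] := eqVneq (u *m M) 0; first by exists u; rewrite ?uM ?scale0r.
have [uMM|uMM] := eqVneq (u *m M *m M) 0; first by exists (u *m M); rewrite ?uMM ?scale0r.
exists (u *m M *m M) => //; rewrite scale0r.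
by have := congr1 (mulmx u) M3; rewrite mulmx0 !mulmxA.
Qed.

Lemma eigenvalue_imag (R : rcfType) n (A : 'M[R]_n) (c : R) :
  c != 0 -> A *m A *m A = - c ^+ 2 *: A -> A != 0 ->
  eigenvalue (map_mx (real_complex R) A) (Complex 0 c).
Proof.
move=> c0 A3 A0; set f := real_complex R.
have [k x0] : exists k, row k A != 0.
  apply/existsP; apply: contraNT A0 => /existsPn rows0.
  by apply/eqP/row_matrixP => k; rewrite row0; apply/eqP; move: (rows0 k); rewrite negbK.
set x := row k A in x0.
have xA2 : x *m A *m A = - c ^+ 2 *: x by rewrite /x -!row_mul A3 linearZ.
apply/eigenvalueP; exists (map_mx f (x *m A) + Complex 0 c *: map_mx f x).
  rewrite mulmxDl -scalemxAl -!map_mxM xA2 map_mxZ scalerDr scalerA addrC.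
  by congr (_ + _); congr (_ *: _); rewrite /f /=; simpc.
have [j xj] : exists j, x 0 j != 0.
  apply/existsP; apply: contraNT x0 => /existsPn xj0.
  by apply/eqP/rowP => j; apply/eqP; move: (xj0 j); rewrite negbK !mxE.
rewrite mxE in xj; apply/eqP => /rowP/(_ j); rewrite !mxE /f /=; simpc => -[_ /eqP].
by rewrite mulf_eq0 (negPf c0) (negPf xj).
Qed.

Section BMatrix.
Variables (R : rcfType) (v w : vec8 R).

Definition coord4 (a : extform R) : 'rV[R]_#|quad| := \row_k a (enum_val k).

Lemma coord4_is_linear : linear coord4.
Proof. by move=> k a b; apply/rowP => j; rewrite !mxE. Qed.
HB.instance Definition _ :=
  GRing.isLinear.Build R (extform R) 'rV[R]_#|quad| _ coord4 coord4_is_linear.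

Definition Bmx : 'M[R]_#|quad| := \matrix_(i, j) Bop v w (basis4 R (enum_val j)) (enum_val i).

Lemma Bmatrix_map : Bmatrix v w = map_mx (real_complex R) Bmx.
Proof. by apply/matrixP => i j; rewrite !mxE. Qed.

Lemma is_kform_quad (I : {set 'I_8}) : I \in quad -> is_kform 4 (basis4 R I).
Proof. by rewrite inE => /eqP; apply: is_kform_basis4. Qed.

Lemma form_dot_basis4 (a : extform R) I : form_dot a (basis4 R I) = a I.
Proof.
rewrite /form_dot (bigD1 I) //= /basis4 eqxx mulr1 big1 ?addr0 // => J /negPf ->.
by rewrite mulr0.
Qed.

(* Row vectors act on the right, i.e. through the transpose of B, which is -B. *)
Lemma coord4_Bmx (a : extform R) : is_kform 4 a -> coord4 a *m Bmx = - coord4 (Bop v w a).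
Proof.
move=> ka; apply/rowP => j; rewrite /coord4 /Bmx !mxE.
have kb := is_kform_quad (enum_valP j).
rewrite -[Bop v w a _]form_dot_basis4 form_dot_Bop // opprK.
rewrite /form_dot (bigID (mem quad)) /= [X in _ + X]big1 ?addr0; last first.
  by move=> I; rewrite inE => /ka ->; rewrite mul0r.
by rewrite [RHS]big_enum_val; apply: eq_bigr => k _; rewrite !mxE.
Qed.

Lemma coord4_basis4 k : coord4 (basis4 R (enum_val k)) = delta_mx 0 k.
Proof. by apply/rowP => j; rewrite !mxE /basis4 (inj_eq enum_val_inj) eqxx. Qed.

Lemma coord4_neq0 (a : extform R) J : is_kform 4 a -> a J != 0 -> coord4 a != 0.
Proof.
move=> ka aJ; have JQ : J \in quad by rewrite inE; apply: contraR aJ => /ka ->.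
apply: contraNneq aJ => /rowP/(_ (enum_rank_in JQ J)).
by rewrite !mxE enum_rankK_in // => ->.
Qed.

Lemma Bmx_cube : Bmx *m Bmx *m Bmx = - wedge_sqnorm v w *: Bmx.
Proof.
apply/row_matrixP => k; rewrite !rowE -coord4_basis4.
have ke := is_kform_quad (enum_valP k); set e := basis4 R (enum_val k) in ke *.
have kBe := is_kform_Bop v w ke; have kBBe := is_kform_Bop v w kBe.
rewrite -scalemxAr !mulmxA (coord4_Bmx ke) !mulNmx (coord4_Bmx kBe) mulNmx (coord4_Bmx kBBe).
by rewrite Bop_cube // linearZ /= opprK scalerN.
Qed.

Lemma Bmx_neq0 : wedge_sqnorm v w != 0 -> Bmx != 0.
Proof.
case/exists_minor => r [s m0]; have rs : r != s by apply: contraNneq m0 => ->; rewrite subrr.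
have [|T [rT sT cT]] := @exists_set_avoid _ r s 3; first by rewrite card_ord.
have ka : is_kform 4 (basis4 R (r |: T)) by apply: is_kform_basis4; rewrite cardsU1 rT cT.
have BaJ : Bop v w (basis4 R (r |: T)) (~: (s |: T)) != 0.
  rewrite Bop4E // !formE /hodge setCK rot_basis4 // oppr_eq0.
  by rewrite !mulf_neq0 /hsign ?signr_eq0.
apply: contraNneq (coord4_neq0 (is_kform_Bop v w ka) BaJ) => B0.
by rewrite -oppr_eq0 -(coord4_Bmx ka) B0 mulmx0.
Qed.

Lemma Bmx_ker : wedge_sqnorm v w != 0 -> exists2 u : 'rV[R]_#|quad|, u *m Bmx = 0 & u != 0.
Proof.
case/exists_minor => r [s m0]; have rs : r != s by apply: contraNneq m0 => ->; rewrite subrr.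
have [|T [rT sT cT]] := @exists_set_avoid _ r s 2; first by rewrite card_ord.
have kx := is_kform_wedge v (is_kform_wedge w (is_kform_basis4 R cT)).
exists (coord4 (wedge v (wedge w (basis4 R T)))).
  rewrite (coord4_Bmx kx) Bop_wedge_wedge; last exact: (is_kform_basis4 R cT).
  by apply/rowP => j; rewrite !mxE oppr0.
apply: (coord4_neq0 (J := r |: (s |: T)) kx).
rewrite wedge_wedge_basis4 // mulf_neq0 ?signr_eq0 //.
by rewrite -oppr_eq0 opprB.
Qed.

Lemma eigenvalue0_Bmx : eigenvalue Bmx 0.
Proof.
have [N0|N0] := eqVneq (wedge_sqnorm v w) 0; last first.
  by case: (Bmx_ker N0) => u uB u0; apply/eigenvalueP; exists u; rewrite ?scale0r.
have [|K [_ _ cK]] := @exists_set_avoid _ (ord0 : 'I_8) ord0 4; first by rewrite card_ord.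
apply: (@eigenvalue0_cube0 _ _ _ (coord4 (basis4 R K))).
  by rewrite Bmx_cube N0 oppr0 scale0r.
by apply: (coord4_neq0 (J := K) (is_kform_basis4 R cK)); rewrite /basis4 eqxx oner_eq0.
Qed.

End BMatrix.

Local Open Scope complex_scope.

Lemma cube_roots_imag (R : rcfType) (c : R) (z : R[i]) :
  z ^+ 3 = (- c ^+ 2)%:C * z -> [\/ z = 0, z = Complex 0 c | z = Complex 0 (- c)].
Proof.
have ic2 : (- c ^+ 2)%:C = Complex 0 c * Complex 0 c :> R[i] by simpc; rewrite expr2.
have icN : Complex 0 (- c) = - Complex 0 c :> R[i] by simpc.
move=> /eqP; rewrite -subr_eq0 ic2 icN.
have -> : z ^+ 3 - Complex 0 c * Complex 0 c * z =
    z * ((z - Complex 0 c) * (z - - Complex 0 c)) by ring.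
by rewrite !mulf_eq0 !subr_eq0 => /or3P[] /eqP ->; [apply: Or31 | apply: Or32 | apply: Or33].
Qed.

Theorem mainTheorem17 (R : rcfType) (v w : vec8 R) :
  (* B maps 4-forms to 4-forms and is skew-symmetric w.r.t. the induced inner product *)
  (forall a : extform R, is_kform 4 a -> is_kform 4 (Bop v w a)) /\
  (forall a b : extform R, is_kform 4 a -> is_kform 4 b ->
     form_dot (Bop v w a) b = - form_dot a (Bop v w b)) /\
  (* its (complex) eigenvalues are exactly 0 and +- i |v /\ w| *)
  (forall z : R[i], eigenvalue (Bmatrix v w) z <->
     (z = 0 \/ z = Complex 0 (wedge_norm v w) \/ z = Complex 0 (- wedge_norm v w))).
Proof.
split; first exact: is_kform_Bop.
split; first exact: form_dot_Bop.
set c := wedge_norm v w; set f := real_complex R.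
have c2 : wedge_sqnorm v w = c ^+ 2 by rewrite sqr_sqrtr //; apply: wedge_sqnorm_ge0.
have cube : Bmx v w *m Bmx v w *m Bmx v w = - c ^+ 2 *: Bmx v w by rewrite Bmx_cube c2.
have eig0 : eigenvalue (map_mx f (Bmx v w)) 0.
  by rewrite -(rmorph0 f) eigenvalue_map; apply: eigenvalue0_Bmx.
have eig_imag c' : c' ^+ 2 = c ^+ 2 -> eigenvalue (map_mx f (Bmx v w)) (Complex 0 c').
  have [-> _|c'0 c'c] := eqVneq c' 0; first exact: eig0.
  apply: (eigenvalue_imag c'0) (Bmx_neq0 _); first by rewrite c'c.
  by rewrite c2 -c'c sqrf_eq0.
move=> z; rewrite Bmatrix_map; split.
  have cubeC : map_mx f (Bmx v w) *m map_mx f (Bmx v w) *m map_mx f (Bmx v w) =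
      (- c ^+ 2)%:C *: map_mx f (Bmx v w) by rewrite -!map_mxM cube map_mxZ.
  by move=> /(eigenvalue_cube cubeC)/cube_roots_imag[]; [left | right; left | right; right].
case=> [->|[->|->]]; first exact: eig0; apply: eig_imag => //; exact: sqrrN.
Qed.
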